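(* Consider the system \[ x_{k+1} = x_k - \rho y_k + \hat g(y_k,w_k),\qquad y_{k+1} = (1-\beta)y_k + \hat h(y_{k-1},w_{k-1})\bigl(J(x_k)-J(x_{k-1})\bigr) \] with the setup described in the context. Then for any function $\bar f:\mathbb{R}^3\to\mathbb{R}$ and any $k\ge1$, \[ \mathbb{E}\Bigl[\frac{\mu h_{k-1}\bar f(x_{k-1},y_{k-1},y_k)}{|y_{k-1}|+\varepsilon}\Delta_{k-1}\Bigr] =\mu\gamma\,\mathbb{E}\bigl[\bar f(x_{k-1},y_{k-1},y_k)\,(\tilde x_{k-1}-\rho y_{k-1})\bigr]. \]
   Context: Setup. Parameters: $\rho>0$, $\beta\in(0,2)$, $\varepsilon>0$, $\omega>0$. The random variables $w_i$, $i\in\mathbb{N}\cup\{0\}$, are i.i.d., each taking the value $-\omega$ or $\omega$ with probability $1/2$. The functions $h,g:\mathbb{R}\to\mathbb{R}$ are odd, satisfy $\mathrm{sign}(g(w))=\mathrm{sign}(h(w))$ for all $w$, and $g(w)=h(w)=0$ if and only if $w=0$. Define $\hat h(y,w):=\frac{h(w)}{|y|+\varepsilon}$ and $\hat g(y,w):=(|y|+\varepsilon)g(w)$. The objective is $J(x)=J^*+\frac{\mu}{2}(x-x^* )^2$ with $\mu>0$, $x^*,J^*\in\mathbb{R}$. The initial data $x_0,y_0$ and the initialization $y_1$ (the $y$-update being applied for $k\ge1$) are deterministic. Notation: $h_k:=h(w_k)$, $g_k:=g(w_k)$, $\tilde x_k:=x_k-x^*$, $\gamma:=\mathbb{E}[h_kg_k]$,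 and \[ \Delta_{k-1}:=(\tilde x_{k-1}-\rho y_{k-1})(|y_{k-1}|+\varepsilon)g_{k-1}-\rho\tilde x_{k-1}y_{k-1}+\tfrac{\rho^2}{2}y_{k-1}^2+\tfrac{g_{k-1}^2}{2}(|y_{k-1}|+\varepsilon)^2, \] so that $J(x_k)=J(x_{k-1})+\mu\Delta_{k-1}$. *)

From HB Require Import structures.
From mathcomp Require Import all_boot all_order all_algebra.
Set Implicit Arguments. Unset Strict Implicit. Unset Printing Implicit Defensive.
Import Order.TTheory GRing.Theory Num.Theory.
Local Open Scope ring_scope.

Section Defs.
Variable R : realFieldType.

(* Sample sequence obtained from the first n signs s; coordinates >= n are
   irrelevant for random variables depending on w_0..w_{n-1}. *)
Definition seq_of_signs (omega : R) (n : nat) (s : {ffun 'I_n -> bool}) : nat -> R :=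
  fun i => match (insub i : option 'I_n) with
           | Some j => if s j then omega else - omega
           | None => omega
           end.

(* Expectation of a random variable F(w) depending only on w_0,...,w_{n-1},
   where the w_i are i.i.d. uniform on {-omega, omega}. *)
Definition Ew (omega : R) (n : nat) (F : (nat -> R) -> R) : R :=
  (2 ^+ n)^-1 * \sum_(s : {ffun 'I_n -> bool}) F (seq_of_signs omega s).

Definition Jobj (mu xstar Jstar x : R) : R := Jstar + mu / 2 * (x - xstar) ^+ 2.

Definition ghat (g : R -> R) (eps y w : R) : R := (`|y| + eps) * g w.
Definition hhat (h : R -> R) (eps y w : R) : R := h w / (`|y| + eps).

(* state n = ((x_n, y_n), (x_{n+1}, y_{n+1})) along the sample path w *)
Fixpoint state (rho beta eps mu xstar Jstar x0 y0 y1 : R) (h g : R -> R)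
    (w : nat -> R) (n : nat) : (R * R) * (R * R) :=
  match n with
  | 0 => ((x0, y0), (x0 - rho * y0 + ghat g eps y0 (w 0%N), y1))
  | n'.+1 =>
      let: ((xa, ya), (xb, yb)) :=
        state rho beta eps mu xstar Jstar x0 y0 y1 h g w n' in
      ((xb, yb),
       (xb - rho * yb + ghat g eps yb (w n),
        (1 - beta) * yb + hhat h eps ya (w n')
                         * (Jobj mu xstar Jstar xb - Jobj mu xstar Jstar xa)))
  end.

Definition xs rho beta eps mu xstar Jstar x0 y0 y1 h g w n : R :=
  (state rho beta eps mu xstar Jstar x0 y0 y1 h g w n).1.1.
Definition ys rho beta eps mu xstar Jstar x0 y0 y1 h g w n : R :=
  (state rho beta eps mu xstar Jstar x0 y0 y1 h g w n).1.2.

(* Delta_{k-1} written in terms of x_{k-1}, y_{k-1}, g_{k-1} *)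
Definition Delta (rho eps xstar x y gk : R) : R :=
  (x - xstar - rho * y) * (`|y| + eps) * gk - rho * (x - xstar) * y
  + rho ^+ 2 / 2 * y ^+ 2 + gk ^+ 2 / 2 * (`|y| + eps) ^+ 2.

Definition gammaE (omega : R) (h g : R -> R) : R :=
  Ew omega 1 (fun w => h (w 0%N) * g (w 0%N)).

End Defs.

From HB Require Import structures.
From mathcomp Require Import all_boot all_order all_algebra.
From mathcomp Require Import ring lra.
Import Order.TTheory GRing.Theory Num.Theory.
Set Implicit Arguments. Unset Strict Implicit. Unset Printing Implicit Defensive.
Local Open Scope ring_scope.

(* The state (x_{k-1}, y_{k-1}) and y_k is determined by w_0, ..., w_{k-2}, so
   flipping the sign of w_{k-1} leaves it unchanged while it turns h_{k-1} and
   g_{k-1} into their opposites.  Expanding Delta_{k-1} as a polynomial in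
   g_{k-1}, only its linear term survives this symmetrisation after
   multiplication by h_{k-1}, and h_{k-1} g_{k-1} = h(omega) g(omega) = gamma
   for both signs. *)

Section SignFlip.
Variable R : realFieldType.
Implicit Types (omega c : R) (F G : (nat -> R) -> R).

Definition flip_last n (s : {ffun 'I_n.+1 -> bool}) : {ffun 'I_n.+1 -> bool} :=
  [ffun i => if i == ord_max then ~~ s i else s i].

Lemma flip_lastK n : involutive (@flip_last n).
Proof.
move=> s; apply/ffunP => i; rewrite !ffunE.
by case: (i == ord_max); rewrite ?negbK.
Qed.

Lemma seq_of_signsE omega n (s : {ffun 'I_n -> bool}) i :
  seq_of_signs omega s i = omega \/ seq_of_signs omega s i = - omega.
Proof.
rewrite /seq_of_signs; case: insubP => [j _ _|_]; last by left.
by case: (s j); [left | right].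
Qed.

Lemma seq_of_signs_flip_last omega n (s : {ffun 'I_n.+1 -> bool}) i :
  seq_of_signs omega (flip_last s) i =
  if i == n then - seq_of_signs omega s i else seq_of_signs omega s i.
Proof.
rewrite /seq_of_signs; case: insubP => [j _ <-|]; last first.
  by rewrite ltnS; case: eqP => // ->; rewrite leqnn.
rewrite ffunE -val_eqE /=.
by case: (nat_of_ord j == n); case: (s j); rewrite ?opprK.
Qed.

Lemma Ew_const_on_signs omega n F c :
  (forall s : {ffun 'I_n -> bool}, F (seq_of_signs omega s) = c) ->
  Ew omega n F = c.
Proof.
move=> Fc; rewrite /Ew (eq_bigr (fun _ => c)) // sumr_const card_ffun.
rewrite card_bool card_ord -[c *+ _]mulr_natr natrX mulrC mulfK //.
by rewrite expf_neq0 // pnatr_eq0.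
Qed.

Lemma odd_mul_seq_of_signs omega n (s : {ffun 'I_n -> bool}) i (h g : R -> R) :
  (forall w, h (- w) = - h w) -> (forall w, g (- w) = - g w) ->
  h (seq_of_signs omega s i) * g (seq_of_signs omega s i) = h omega * g omega.
Proof.
by move=> hN gN; case: (seq_of_signsE omega s i) => ->; rewrite ?hN ?gN ?mulrNN.
Qed.

Lemma EwZ omega n c F : Ew omega n (fun w => c * F w) = c * Ew omega n F.
Proof. by rewrite /Ew -mulr_sumr mulrCA. Qed.

Lemma Ew_eq_flip_last omega n F G :
  (forall s : {ffun 'I_n.+1 -> bool},
     F (seq_of_signs omega s) + F (seq_of_signs omega (flip_last s)) =
     G (seq_of_signs omega s) + G (seq_of_signs omega (flip_last s))) ->
  Ew omega n.+1 F = Ew omega n.+1 G.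
Proof.
move=> FG; rewrite /Ew; congr (_ * _).
have sym (H : (nat -> R) -> R) :
    (\sum_(s : {ffun 'I_n.+1 -> bool}) H (seq_of_signs omega s)) *+ 2 =
    \sum_(s : {ffun 'I_n.+1 -> bool})
       (H (seq_of_signs omega s) + H (seq_of_signs omega (flip_last s))).
  rewrite big_split mulr2n; congr (_ + _).
  by apply: reindex_inj; apply/inv_inj/flip_lastK.
by have := sym F; rewrite (eq_bigr _ (fun s _ => FG s)) -sym; lra.
Qed.

End SignFlip.

Section Causality.
Context {R : realFieldType} {rho beta eps mu xstar Jstar x0 y0 y1 : R}.
Context {h g : R -> R}.
Local Notation st := (state rho beta eps mu xstar Jstar x0 y0 y1 h g).

Lemma state_succ_fst w n : (st w n.+1).1 = (st w n).2.
Proof. by rewrite /=; case: (st w n) => [[? ?] [? ?]]. Qed.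

Lemma state_eq_prefix w w' n :
  (forall i, (i <= n)%N -> w i = w' i) -> st w n = st w' n.
Proof.
elim: n => [|n IH] ww' /=; first by rewrite ww'.
rewrite IH => [|i le_in]; last by rewrite ww' // (leq_trans le_in).
by rewrite !ww' ?leqnSn.
Qed.

Lemma state_fst_eq_prefix w w' n :
  (forall i, (i < n)%N -> w i = w' i) -> (st w n).1 = (st w' n).1.
Proof.
case: n => [//|n] ww'.
by rewrite !state_succ_fst (@state_eq_prefix w w' n).
Qed.

Lemma state_snd_snd_eq_prefix w w' n :
  (forall i, (i < n)%N -> w i = w' i) -> (st w n).2.2 = (st w' n).2.2.
Proof.
case: n => [//|n] ww' /=.
rewrite (@state_eq_prefix w w' n) => [|i le_in]; last exact: ww'.
by case: (st w' n) => [[? ?] [? ?]] /=; rewrite ww'.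
Qed.

End Causality.

Lemma Delta_sub_oppg (R : realFieldType) (rho eps xstar x y v : R) :
  Delta rho eps xstar x y v - Delta rho eps xstar x y (- v) =
  2 * v * (x - xstar - rho * y) * (`|y| + eps).
Proof. by rewrite /Delta; ring. Qed.

Lemma weighted_Delta_flip_sum (R : realFieldType) (mu rho eps xstar x y f u v : R) :
  `|y| + eps != 0 ->
  mu * u * f / (`|y| + eps) * Delta rho eps xstar x y v
  + mu * - u * f / (`|y| + eps) * Delta rho eps xstar x y (- v)
  = mu * (u * v) * (f * (x - xstar - rho * y))
  + mu * (u * v) * (f * (x - xstar - rho * y)).
Proof.
move=> c_neq0.
transitivity (mu * u * f / (`|y| + eps)
  * (Delta rho eps xstar x y v - Delta rho eps xstar x y (- v))); first by ring.
by rewrite Delta_sub_oppg; field.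
Qed.

Lemma gammaE_odd (R : realFieldType) (omega : R) (h g : R -> R) :
  (forall w, h (- w) = - h w) -> (forall w, g (- w) = - g w) ->
  gammaE omega h g = h omega * g omega.
Proof.
by move=> hN gN; apply: Ew_const_on_signs => s; apply: odd_mul_seq_of_signs.
Qed.

Theorem lemma3 (R : realFieldType) (rho beta eps omega mu xstar Jstar x0 y0 y1 : R)
    (h g : R -> R) (fbar : R -> R -> R -> R) (k : nat) :
  0 < rho -> 0 < beta -> beta < 2 -> 0 < eps -> 0 < omega -> 0 < mu ->
  (forall w, h (- w) = - h w) -> (forall w, g (- w) = - g w) ->
  (forall w, Num.sg (g w) = Num.sg (h w)) ->
  (forall w, g w = 0 <-> w = 0) -> (forall w, h w = 0 <-> w = 0) ->
  (1 <= k)%N ->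
  let x := xs rho beta eps mu xstar Jstar x0 y0 y1 h g in
  let y := ys rho beta eps mu xstar Jstar x0 y0 y1 h g in
  Ew omega k (fun w =>
      mu * h (w k.-1) * fbar (x w k.-1) (y w k.-1) (y w k) / (`|y w k.-1| + eps)
      * Delta rho eps xstar (x w k.-1) (y w k.-1) (g (w k.-1)))
  = mu * gammaE omega h g
    * Ew omega k (fun w =>
        fbar (x w k.-1) (y w k.-1) (y w k) * (x w k.-1 - xstar - rho * y w k.-1)).
Proof.
move=> _ _ _ eps_gt0 _ _ hN gN _ _ _.
case: k => [//|n] _ x y /=.
rewrite -EwZ gammaE_odd //; apply: Ew_eq_flip_last => s.
set w := seq_of_signs omega s; set w' := seq_of_signs omega (flip_last s).
have ww' i : (i < n)%N -> w i = w' i.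
  by move=> lt_in; rewrite /w' seq_of_signs_flip_last ltn_eqF.
have x_eq : x w' n = x w n by rewrite /x /xs (state_fst_eq_prefix ww').
have y_eq : y w' n = y w n by rewrite /y /ys (state_fst_eq_prefix ww').
have y_succ_eq : y w' n.+1 = y w n.+1.
  by rewrite /y /ys !state_succ_fst (state_snd_snd_eq_prefix ww').
have w'_n : w' n = - w n by rewrite /w' seq_of_signs_flip_last eqxx.
have hg_n : h (w n) * g (w n) = h omega * g omega by apply: odd_mul_seq_of_signs.
have c_neq0 : `|y w n| + eps != 0 by rewrite lt0r_neq0 // ltr_wpDl.
rewrite x_eq y_eq y_succ_eq w'_n hN gN -hg_n.
exact: weighted_Delta_flip_sum.
Qed.
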